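(* For every topological space $X$, the games $G_1(\mathcal{C}_\mathcal{O},\mathcal{C}_\mathcal{O})$ and $G_1(\mathcal{C}_X, \neg \mathcal{C}_\mathcal{O})$ are dual; that is: (i) Alice has a winning strategy in $G_1(\mathcal{C}_\mathcal{O},\mathcal{C}_\mathcal{O})$ iff Bob has a winning strategy in $G_1(\mathcal{C}_X, \neg \mathcal{C}_\mathcal{O})$, and Alice has a winning strategy in $G_1(\mathcal{C}_X, \neg \mathcal{C}_\mathcal{O})$ iff Bob has a winning strategy in $G_1(\mathcal{C}_\mathcal{O},\mathcal{C}_\mathcal{O})$; (ii) Alice has a winning predetermined strategy in $G_1(\mathcal{C}_\mathcal{O},\mathcal{C}_\mathcal{O})$ iff Bob has a winning Markov strategy in $G_1(\mathcal{C}_X, \neg \mathcal{C}_\mathcal{O})$, and Alice has a winning predetermined strategy in $G_1(\mathcal{C}_X, \neg \mathcal{C}_\mathcal{O})$ iff Bob has a winning Markov strategy in $G_1(\mathcal{C}_\mathcal{O},\mathcal{C}_\mathcal{O})$.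
   Context: $\mathcal{C}_\mathcal{O}$ is the collection of all covers of $X$ by clopen sets. For $x\in X$, $\mathcal{C}_{\mathcal{T}_{X,x}}$ is the set of nonempty clopen subsets of $X$ containing $x$, and $\mathcal{C}_X=\{\mathcal{C}_{\mathcal{T}_{X,x}}:x\in X\}$. For families $\mathcal{A},\mathcal{B}$, the game $G_1(\mathcal{A},\mathcal{B})$: in each inning $n\in\omega$ Alice chooses $A_n\in\mathcal{A}$ and Bob chooses $B_n\in A_n$; Bob wins if $\{B_n:n\in\omega\}\in\mathcal{B}$, Alice otherwise. $G_1(\mathcal{A},\neg\mathcal{B})$ denotes $G_1(\mathcal{A},\mathcal{P}(\bigcup\mathcal{A})\setminus\mathcal{B})$. A strategy for Alice is a function $\sigma$ from finite sequences of elements of $\bigcup\mathcal{A}$ to $\mathcal{A}$; it is winning if whenever $x_n\in\sigma(\langle x_i:i<n\rangle)$ for all $n$, $\{x_n:n\in\omega\}\notin\mathcal{B}$. A strategy for Bob is a function $\tau$ from finite sequences $\langle A_0,\dots,A_n\rangle$ of elements of $\mathcal{A}$ to $\bigcup\mathcal{A}$ with $\tau(A_0,\dots,A_n)\in A_n$; it is winning if for all such sequences $\{\tau(A_0,\dots,A_n):n\in\omega\}\in\mathcal{B}$. A predetermined strategy for Alice is a function $\sigma:\omega\to\mathcal{A}$ (her move at inning $n$ is $\sigma(n)$). A Markov strategy for Bob is a function $\tau:\mathcal{A}\times\omega\to\bigcup\mathcal{A}$ with $\tau(A,n)\in A$ (his move at inning $n$ is $\tau(A_n,n)$). *)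

From mathcomp Require Import all_boot all_classical.
From mathcomp Require Import topology.
From Stdlib Require Import List.

Set Implicit Arguments.
Unset Strict Implicit.
Unset Printing Implicit Defensive.
Local Open Scope classical_set_scope.

Section Games.
Variable U : Type.
Implicit Types (A B : set (set U)).

Definition UnionFam A : set U := [set y | exists2 a, A a & a y].

(* G_1(A, not B) := G_1(A, P(\bigcup A) \ B) *)
Definition negB A B : set (set U) :=
  [set S | S `<=` UnionFam A /\ ~ B S].

Definition prefix (x : nat -> U) (n : nat) : list U := map x (iota 0 n).
Definition prefixS (a : nat -> set U) (n : nat) : list (set U) := map a (iota 0 n).

Definition AliceStrategy A (sigma : list U -> set U) : Prop :=
  forall s, Forall (UnionFam A) s -> A (sigma s).

Definition AliceWinning A B (sigma : list U -> set U) : Prop :=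
  AliceStrategy A sigma /\
  forall x : nat -> U, (forall n, sigma (prefix x n) (x n)) -> ~ B (range x).

Definition BobStrategy A (tau : list (set U) -> U) : Prop :=
  forall (s : list (set U)) (a : set U), Forall A s -> A a -> a (tau (s ++ a :: nil)).

Definition BobWinning A B (tau : list (set U) -> U) : Prop :=
  BobStrategy A tau /\
  forall a : nat -> set U, (forall n, A (a n)) ->
    B (range (fun n => tau (prefixS a n.+1))).

Definition AliceHasWS A B := exists sigma, AliceWinning A B sigma.
Definition BobHasWS A B := exists tau, BobWinning A B tau.

Definition AliceWinningPre A B (sigma : nat -> set U) : Prop :=
  (forall n, A (sigma n)) /\
  forall x : nat -> U, (forall n, sigma n (x n)) -> ~ B (range x).

Definition BobWinningMarkov A B (tau : set U -> nat -> U) : Prop :=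
  (forall a n, A a -> a (tau a n)) /\
  forall a : nat -> set U, (forall n, A (a n)) ->
    B (range (fun n => tau (a n) n)).

Definition AliceHasWPre A B := exists sigma, AliceWinningPre A B sigma.
Definition BobHasWMarkov A B := exists tau, BobWinningMarkov A B tau.
End Games.

Section Families.
Variable X : topologicalType.

Definition clopen_covers : set (set (set X)) :=
  [set U | (forall A, U A -> clopen A) /\ UnionFam U = setT].

Definition clopen_nbhds (x : X) : set (set X) :=
  [set A | clopen A /\ A !=set0 /\ A x].

Definition clopen_nbhd_families : set (set (set X)) :=
  [set clopen_nbhds x | x in setT].
End Families.

Arguments clopen_covers X : clear implicits.
Arguments clopen_nbhd_families X : clear implicits.

From Pilot Require Import Defs.
From mathcomp Require Import all_boot all_classical.
From mathcomp Require Import topology.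
From Stdlib Require Import List.

Set Implicit Arguments.
Unset Strict Implicit.
Unset Printing Implicit Defensive.
Local Open Scope classical_set_scope.

(* Call a family R a reflection of a family A when every member of A meets
   every member of R, and the image of every selector (choice function) on
   either family contains a member of the other.  For a reflection, a
   strategy for one player in G_1(A, B) converts into a strategy for the
   opponent in G_1(R, not B), and back:
   - Alice's strategy becomes Bob's by answering each move of the dual game
     with a point of its intersection with Alice's current move;
   - Bob's strategy becomes Alice's by offering, at each inning, a member of
     the other family inside the set of all of Bob's possible answers.
   With full information, plays of the two games are matched by replaying
   the history through a response rule ([replay] below); for predetermined
   and Markov strategies no history is involved. *)

Lemma prefix_S (T : Type) (x : nat -> T) (n : nat) :
  Defs.prefix x n.+1 = Defs.prefix x n ++ [:: x n].
Proof.
rewrite /Defs.prefix -addn1 iotaD /=.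
by elim: (iota 0 n) => [|k s IH] //=; rewrite IH.
Qed.

Lemma Forall_prefix (T : Type) (P : T -> Prop) (x : nat -> T) (n : nat) :
  (forall k, P (x k)) -> Forall P (Defs.prefix x n).
Proof. by move=> Px; apply/Forall_map/Forall_forall. Qed.

Section Replay.
Variables V W : Type.
Implicit Types (r : list V -> W -> V) (s : list W).

Definition replay r s : list V :=
  fold_left (fun acc w => acc ++ [:: r acc w]) s nil.

Lemma replay_snoc r s w : replay r (s ++ [:: w]) = replay r s ++ [:: r (replay r s) w].
Proof. by rewrite /replay fold_left_app. Qed.

Lemma last_replay_snoc r s w (d : V) :
  List.last (replay r (s ++ [:: w])) d = r (replay r s) w.
Proof. by rewrite replay_snoc last_last. Qed.

Lemma Forall_replay (P : V -> Prop) (Q : W -> Prop) r :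
  (forall p w, Forall P p -> Q w -> P (r p w)) ->
  forall s, Forall Q s -> Forall P (replay r s).
Proof.
move=> step s Qs; rewrite /replay.
suff grow acc : Forall P acc ->
    Forall P (fold_left (fun acc w => acc ++ [:: r acc w]) s acc) by exact: grow.
elim: s Qs acc => [|w s IH] //= /Forall_cons_iff[Qw Qs] acc Pacc.
by apply: IH => //; apply/Forall_app; split => //; constructor; [exact: step|].
Qed.

Definition play r (x : nat -> W) (n : nat) : V := r (replay r (Defs.prefix x n)) (x n).

Lemma replay_prefix r (x : nat -> W) (n : nat) :
  replay r (Defs.prefix x n) = Defs.prefix (play r x) n.
Proof. by elim: n => [//|n IH]; rewrite !prefix_S replay_snoc -IH. Qed.

Lemma last_replay_prefixS r (x : nat -> W) (n : nat) (d : V) :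
  List.last (replay r (Defs.prefix x n.+1)) d = play r x n.
Proof. by rewrite prefix_S last_replay_snoc. Qed.

End Replay.

Section Duality.
Variable U : pointedType.
Implicit Types (A R B : set (set U)).

Definition meets A R := forall a r, A a -> R r -> a `&` r !=set0.

Definition selects A R := forall g : set U -> U,
  (forall a, A a -> a (g a)) -> exists r, R r /\ r `<=` g @` A.

Definition reflection A R := [/\ meets A R, selects R A & selects A R].

Lemma meetsC A R : meets A R -> meets R A.
Proof. by move=> mAR r a Rr Aa; rewrite setIC; exact: mAR. Qed.

(* Alice's strategy in G_1(A1, C1) yields Bob's in G_1(A2, C2): Bob answers
   a move a of the dual game by a point of a and of Alice's current move. *)
Lemma alice_to_bob A1 C1 A2 C2 :
  meets A1 A2 ->
  (forall S, S `<=` UnionFam A1 -> S `<=` UnionFam A2 -> ~ C1 S -> C2 S) ->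
  AliceHasWS A1 C1 -> BobHasWS A2 C2.
Proof.
move=> meet12 transfer [sigma [sigmaA1 sigma_wins]].
pose r p a := xget point (sigma p `&` a).
have r_legal p a : Forall (UnionFam A1) p -> A2 a -> (sigma p `&` a) (r p a).
  by move=> /sigmaA1 A1p A2a; apply: xgetPex; exact: meet12.
have replay_legal : forall s, Forall A2 s -> Forall (UnionFam A1) (replay r s).
  apply: Forall_replay => p a A1p A2a.
  by exists (sigma p); [exact: sigmaA1 | exact: (r_legal p a A1p A2a).1].
exists (fun s => List.last (replay r s) point); split.
  move=> s a /replay_legal A1s A2a; rewrite last_replay_snoc.
  exact: (r_legal _ _ A1s A2a).2.
move=> a A2a; rewrite (funext (last_replay_prefixS r a ^~ point)).
have y_legal n : (sigma (Defs.prefix (play r a) n) `&` a n) (play r a n)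
    /\ Forall (UnionFam A1) (Defs.prefix (play r a) n).
  rewrite -replay_prefix; split; last exact/replay_legal/Forall_prefix.
  exact/r_legal/A2a/replay_legal/Forall_prefix.
apply: transfer.
- move=> _ [n _ <-]; have [[in_sigma _] A1_history] := y_legal n.
  by exists (sigma (Defs.prefix (play r a) n)) => //; exact: sigmaA1.
- by move=> _ [n _ <-]; exists (a n) => //; case: (y_legal n) => -[].
- by apply: sigma_wins => n; case: (y_legal n) => -[].
Qed.

(* Bob's strategy in G_1(A1, C1) yields Alice's in G_1(A2, C2): Alice plays
   a member of A2 inside the set of Bob's possible answers, and recovers
   from each point chosen against her a move of A1 producing that answer. *)
Lemma bob_to_alice A1 C1 A2 C2 :
  selects A1 A2 -> (forall S, C1 S -> ~ C2 S) ->
  BobHasWS A1 C1 -> AliceHasWS A2 C2.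
Proof.
move=> sel transfer [tau [tauA1 tau_wins]].
pose f p y := xget (xget point A1) [set a | A1 a /\ tau (p ++ [:: a]) = y].
have replay_legal s : A1 !=set0 -> Forall A1 (replay f s).
  move=> A1_ne; apply: (Forall_replay (Q := setT)); last exact/Forall_forall.
  move=> p y _ _; rewrite /f; case: xgetP => [a -> []|_] //.
  exact: xgetPex.
pose answers s := (fun a => tau (replay f s ++ [:: a])) @` A1.
pose sigma s := xget point [set r | A2 r /\ r `<=` answers s].
have sigma_sel s : [set r | A2 r /\ r `<=` answers s] (sigma s).
  apply: xgetPex; apply: sel => a A1a.
  by apply: tauA1 => //; apply: replay_legal; exists a.
exists sigma; split; first by move=> s _; exact: (sigma_sel s).1.
move=> x x_legal.
have a_spec n :
    [set a | A1 a /\ tau (replay f (Defs.prefix x n) ++ [:: a]) = x n] (play f x n).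
  have [a A1a tau_a] := (sigma_sel _).2 _ (x_legal n).
  by apply: xgetPex; exists a.
have := tau_wins _ (fun n => (a_spec n).1).
have -> : (fun n => tau (prefixS (play f x) n.+1)) = x.
  apply: funext => n; rewrite /Defs.prefixS -/(Defs.prefix _ _).
  by rewrite prefix_S -replay_prefix (a_spec n).2.
exact: transfer.
Qed.

Lemma alice_pre_to_bob_markov A1 C1 A2 C2 :
  meets A1 A2 ->
  (forall S, S `<=` UnionFam A1 -> S `<=` UnionFam A2 -> ~ C1 S -> C2 S) ->
  AliceHasWPre A1 C1 -> BobHasWMarkov A2 C2.
Proof.
move=> meet12 transfer [sigma [sigmaA1 sigma_wins]].
pose tau a n := xget point (sigma n `&` a).
have tau_legal a n : A2 a -> (sigma n `&` a) (tau a n).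
  by move=> A2a; apply: xgetPex; exact: meet12.
exists tau; split; first by move=> a n /(tau_legal a n) [].
move=> a A2a; have y_legal n := tau_legal _ n (A2a n).
apply: transfer.
- by move=> _ [n _ <-]; exists (sigma n); [exact: sigmaA1 | exact: (y_legal n).1].
- by move=> _ [n _ <-]; exists (a n); [exact: A2a | exact: (y_legal n).2].
- by apply: sigma_wins => n; exact: (y_legal n).1.
Qed.

Lemma bob_markov_to_alice_pre A1 C1 A2 C2 :
  selects A1 A2 -> (forall S, C1 S -> ~ C2 S) ->
  BobHasWMarkov A1 C1 -> AliceHasWPre A2 C2.
Proof.
move=> sel transfer [tau [tauA1 tau_wins]].
pose sigma n := xget point [set r | A2 r /\ r `<=` (tau^~ n) @` A1].
have sigma_sel n : [set r | A2 r /\ r `<=` (tau^~ n) @` A1] (sigma n).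
  by apply: xgetPex; apply: sel => a; exact: tauA1.
exists sigma; split; first by move=> n; exact: (sigma_sel n).1.
move=> x x_legal.
have /choice [a a_spec] : forall n, exists a, A1 a /\ tau a n = x n.
  by move=> n; have [a A1a tau_a] := (sigma_sel n).2 _ (x_legal n); exists a.
have := tau_wins a (fun n => (a_spec n).1).
rewrite (funext (fun n => (a_spec n).2)); exact: transfer.
Qed.

Theorem reflection_duality A R B : reflection A R ->
  ((AliceHasWS A B <-> BobHasWS R (negB R B)) /\
   (AliceHasWS R (negB R B) <-> BobHasWS A B)) /\
  ((AliceHasWPre A B <-> BobHasWMarkov R (negB R B)) /\
   (AliceHasWPre R (negB R B) <-> BobHasWMarkov A B)).
Proof.
case=> meetAR selRA selAR; have meetRA := meetsC meetAR.
have negB_intro S : S `<=` UnionFam A -> S `<=` UnionFam R -> ~ B S -> negB R B S.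
  by move=> _ SR nB.
have B_of_not_negB S : S `<=` UnionFam R -> S `<=` UnionFam A -> ~ negB R B S -> B S.
  by move=> SR _ nnB; apply: contrapT => nB; exact: nnB.
have negB_not_B S : negB R B S -> ~ B S by case.
have B_not_negB S : B S -> ~ negB R B S by move=> BS [].
do !split.
- exact: alice_to_bob.
- exact: bob_to_alice.
- exact: alice_to_bob.
- exact: bob_to_alice.
- exact: alice_pre_to_bob_markov.
- exact: bob_markov_to_alice_pre.
- exact: alice_pre_to_bob_markov.
- exact: bob_markov_to_alice_pre.
Qed.

End Duality.

Section ClopenReflection.
Variable X : topologicalType.
Local Notation CO := (clopen_covers X).
Local Notation CX := (clopen_nbhd_families X).

Lemma clopen_nbhds_family (x : X) : CX (clopen_nbhds x).
Proof. by exists x. Qed.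

Lemma clopen_cover_nbhd (V : set (set X)) (x : X) :
  CO V -> exists2 a, V a & clopen_nbhds x a.
Proof.
case=> clV coverV; have : UnionFam V x by rewrite coverV.
by case=> a Va ax; exists a => //; split; [exact: clV | split; [exists x|]].
Qed.

Lemma clopen_covers_meet : meets CO CX.
Proof.
move=> V _ coV [x _ <-]; have [a Va nbhd_a] := clopen_cover_nbhd x coV.
by exists a.
Qed.

Lemma clopen_nbhds_select_cover : selects CX CO.
Proof.
move=> g g_in; exists (g @` CX); split => //; split.
  by move=> _ [_ [x _ <-] <-]; have [] := g_in _ (clopen_nbhds_family x).
apply/seteqP; split => y // _; exists (g (clopen_nbhds y)).
  by exists (clopen_nbhds y) => //; exact: clopen_nbhds_family.
by have [_ []] := g_in _ (clopen_nbhds_family y).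
Qed.

(* If a selector on clopen covers picked, for every point, some clopen
   neighbourhood it never selects, these unselected sets would form a clopen
   cover whose selected member is both selected and unselected. *)
Lemma clopen_covers_select_nbhds : selects CO CX.
Proof.
move=> g g_in; apply: contrapT => no_point.
pose unselected := [set b : set X | clopen b /\ ~ (g @` CO) b].
have co_unselected : CO unselected.
  split; first by move=> b [].
  apply/seteqP; split => y // _.
  have /nonsubset [b [[clb [_ yb]] not_sel]] : ~ clopen_nbhds y `<=` g @` CO.
    by move=> sub; apply: no_point; exists (clopen_nbhds y); split => //; exists y.
  by exists b.
have [_] := g_in _ co_unselected; apply; exists unselected => //.
Qed.

Lemma clopen_reflection : reflection CO CX.
Proof.
split; [exact: clopen_covers_meet | exact: clopen_nbhds_select_cover
       | exact: clopen_covers_select_nbhds].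
Qed.

End ClopenReflection.

Theorem corollary3p6 (X : topologicalType) :
  ((AliceHasWS (clopen_covers X) (clopen_covers X) <->
      BobHasWS (clopen_nbhd_families X)
        (negB (clopen_nbhd_families X) (clopen_covers X))) /\
   (AliceHasWS (clopen_nbhd_families X)
        (negB (clopen_nbhd_families X) (clopen_covers X)) <->
      BobHasWS (clopen_covers X) (clopen_covers X))) /\
  ((AliceHasWPre (clopen_covers X) (clopen_covers X) <->
      BobHasWMarkov (clopen_nbhd_families X)
        (negB (clopen_nbhd_families X) (clopen_covers X))) /\
   (AliceHasWPre (clopen_nbhd_families X)
        (negB (clopen_nbhd_families X) (clopen_covers X)) <->
      BobHasWMarkov (clopen_covers X) (clopen_covers X))).
Proof. exact: reflection_duality (clopen_reflection X). Qed.
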